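(* Let $G$ be a countable group, equipped with a proper left-invariant metric, which is not locally finite. Suppose $E_1,E_2,E_3$ are pairwise disjoint NCC subsets of $G$. Then $G$ acts trivially on at most one of $E_1,E_2,E_3$.
   Context: A group is locally finite if every finite subset is contained in a finite subgroup. A subset $A$ of a metric space $X$ is coarsely clopen if for all $r>0$ there is a bounded $K$ such that no $x\in A\setminus K$, $y\in (X\setminus A)\setminus K$ satisfy $d(x,y)<r$. An NCC set (non-trivial coarsely clopen set) is a coarsely clopen $Y\subset X$ with both $Y$ and $X\setminus Y$ infinite (in a group with proper metric: unbounded). $G$ acts trivially on an NCC set $E\subset G$ if the symmetric difference $E\,\Delta\,(g\cdot E)$ is finite for every $g\in G$. *)

From Stdlib Require Import Reals List.
Open Scope R_scope.

Section Defs.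
Context {G : Type}.

Definition is_group (mul : G -> G -> G) (inv : G -> G) (one : G) : Prop :=
  (forall x y z, mul x (mul y z) = mul (mul x y) z) /\
  (forall x, mul one x = x) /\ (forall x, mul x one = x) /\
  (forall x, mul (inv x) x = one) /\ (forall x, mul x (inv x) = one).

Definition countable_type : Prop :=
  exists f : G -> nat, forall x y, f x = f y -> x = y.

Definition finite_set (A : G -> Prop) : Prop :=
  exists l : list G, forall x, A x -> In x l.

Definition infinite_set (A : G -> Prop) : Prop := ~ finite_set A.

Definition is_metric (d : G -> G -> R) : Prop :=
  (forall x y, 0 <= d x y) /\
  (forall x y, d x y = 0 <-> x = y) /\
  (forall x y, d x y = d y x) /\
  (forall x y z, d x z <= d x y + d y z).

Definition left_invariant (mul : G -> G -> G) (d : G -> G -> R) : Prop :=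
  forall g x y, d (mul g x) (mul g y) = d x y.

Definition proper_metric (d : G -> G -> R) : Prop :=
  forall x r, finite_set (fun y => d x y <= r).

Definition bounded (d : G -> G -> R) (K : G -> Prop) : Prop :=
  exists x0 r, forall k, K k -> d x0 k <= r.

Definition is_subgroup (mul : G -> G -> G) (inv : G -> G) (one : G)
  (H : G -> Prop) : Prop :=
  H one /\ (forall x y, H x -> H y -> H (mul x y)) /\ (forall x, H x -> H (inv x)).

Definition locally_finite (mul : G -> G -> G) (inv : G -> G) (one : G) : Prop :=
  forall l : list G, exists H : G -> Prop,
    is_subgroup mul inv one H /\ finite_set H /\ (forall x, In x l -> H x).

Definition coarsely_clopen (d : G -> G -> R) (A : G -> Prop) : Prop :=
  forall r, 0 < r -> exists K : G -> Prop, bounded d K /\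
    forall x y, A x -> ~ K x -> ~ A y -> ~ K y -> ~ (d x y < r).

Definition NCC (d : G -> G -> R) (Y : G -> Prop) : Prop :=
  coarsely_clopen d Y /\ infinite_set Y /\ infinite_set (fun x => ~ Y x).

(* g . E = { g e | e in E } = { x | g^-1 x in E } *)
Definition translate (mul : G -> G -> G) (inv : G -> G) (g : G) (E : G -> Prop)
  : G -> Prop := fun x => E (mul (inv g) x).

Definition symdiff (A B : G -> Prop) : G -> Prop :=
  fun x => (A x /\ ~ B x) \/ (B x /\ ~ A x).

Definition acts_trivially (mul : G -> G -> G) (inv : G -> G) (E : G -> Prop) : Prop :=
  forall g, finite_set (symdiff E (translate mul inv g E)).

End Defs.

From Stdlib Require Import Reals List Lia Lra Classical Wf_nat.
Open Scope R_scope.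

(* Lemma 5.9.  Suppose G acts trivially on two disjoint NCC sets A and B
   while C := G \ (A ∪ B) is infinite; we derive a contradiction.
   - Since G is not locally finite, a finite symmetric set [gens] generates an
     infinite subgroup H.  Right multiplication by a generator moves points a
     bounded distance, so each of A, B, C changes along a step x ↦ x⋅s only at
     points of a finite set L; and each is left almost invariant (P and p⋅P
     differ in finitely many points).
   - [infinite_trace_on_subgroup]: each such infinite set meets H in an
     infinite set, because walking from p ∈ P along words of H must leave P
     through L, which confines P to finitely many left translates of P ∩ H.
   - [pivot_exists]: pick h with h⋅k ∈ A and h⋅k long in H for all k ∈ L.
     Along geodesics in H the set of points that are short or outside A is
     prefix-closed and its translate by h⁻¹ avoids L, so A and B are constant
     on h⁻¹⋅(H \ A) ([constant_off_A]).
   - Whichever of A, B, C contains h⁻¹, this makes the infinite set H ∩ B or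
     H ∩ C lie in a symmetric difference P Δ h⁻¹P, which is finite. *)

Section FiniteSets.
Context {T : Type}.

Lemma finite_subset (A B : T -> Prop) :
  finite_set B -> (forall x, A x -> B x) -> finite_set A.
Proof. intros [l Hl] AB. exists l. intros x Ax. apply Hl, AB, Ax. Qed.

Lemma finite_union (A B : T -> Prop) :
  finite_set A -> finite_set B -> finite_set (fun x => A x \/ B x).
Proof.
  intros [l1 H1] [l2 H2]. exists (l1 ++ l2).
  intros x [Ax | Bx]; apply in_or_app; [left | right]; auto.
Qed.

Lemma finite_indexed_union {I : Type} (L : list I) (P : I -> T -> Prop) :
  (forall i, In i L -> finite_set (P i)) ->
  finite_set (fun x => exists i, In i L /\ P i x).
Proof.
  induction L as [|i L IH]; intros HP.
  - exists nil. intros x [j [[] _]].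
  - destruct (HP i (or_introl eq_refl)) as [li Hi].
    destruct IH as [lL HL]; [intros j Hj; apply HP; right; exact Hj |].
    exists (li ++ lL). intros x [j [[<- | Hj] Pjx]]; apply in_or_app.
    + left; auto.
    + right; apply HL; eauto.
Qed.

Lemma finite_image {U : Type} (f : T -> U) (A : T -> Prop) :
  finite_set A -> finite_set (fun y => exists x, A x /\ y = f x).
Proof. intros [l Hl]. exists (map f l). intros y [x [Ax ->]]. apply in_map, Hl, Ax. Qed.

Lemma infinite_not_included (A B : T -> Prop) :
  infinite_set A -> finite_set B -> exists x, A x /\ ~ B x.
Proof.
  intros HA HB. apply NNPP. intros Hno. apply HA, (finite_subset A B HB).
  intros x Ax. apply NNPP. intros nBx. apply Hno. eauto.
Qed.

End FiniteSets.

Section Group.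
Context {G : Type} (mul : G -> G -> G) (inv : G -> G) (one : G).
Hypothesis Hgrp : is_group mul inv one.
Local Infix "⋅" := mul (at level 40, left associativity).

Lemma mul_assoc x y z : x ⋅ (y ⋅ z) = x ⋅ y ⋅ z.
Proof. pose proof Hgrp as (H & _). apply H. Qed.

Lemma mul_one_l x : one ⋅ x = x.
Proof. pose proof Hgrp as (_ & H & _). apply H. Qed.

Lemma mul_one_r x : x ⋅ one = x.
Proof. pose proof Hgrp as (_ & _ & H & _). apply H. Qed.

Lemma mul_inv_l x : inv x ⋅ x = one.
Proof. pose proof Hgrp as (_ & _ & _ & H & _). apply H. Qed.

Lemma mul_inv_r x : x ⋅ inv x = one.
Proof. pose proof Hgrp as (_ & _ & _ & _ & H). apply H. Qed.

Lemma inv_inv x : inv (inv x) = x.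
Proof.
  rewrite <- (mul_one_r (inv (inv x))), <- (mul_inv_l x), mul_assoc, mul_inv_l.
  apply mul_one_l.
Qed.

Lemma inv_one : inv one = one.
Proof. rewrite <- (mul_one_r (inv one)). apply mul_inv_l. Qed.

Lemma mul_inv_cancel_l g x : g ⋅ (inv g ⋅ x) = x.
Proof. rewrite mul_assoc, mul_inv_r. apply mul_one_l. Qed.

Lemma mul_inv_cancel_r x g : x ⋅ g ⋅ inv g = x.
Proof. rewrite <- mul_assoc, mul_inv_r. apply mul_one_r. Qed.

Lemma inv_mul x y : inv (x ⋅ y) = inv y ⋅ inv x.
Proof.
  rewrite <- (mul_one_l (inv y ⋅ inv x)), <- (mul_inv_l (x ⋅ y)).
  rewrite <- mul_assoc, <- (mul_assoc x y), (mul_assoc y), mul_inv_r, mul_one_l.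
  rewrite mul_inv_r. symmetry. apply mul_one_r.
Qed.

Section Words.
Variable gens : list G.

Inductive word : nat -> G -> Prop :=
| word_nil : word 0 one
| word_snoc n x s : word n x -> In s gens -> word (S n) (x ⋅ s).

Definition generated (x : G) : Prop := exists n, word n x.

Definition short (rad : nat) (x : G) : Prop := exists m, (m <= rad)%nat /\ word m x.

Definition geodesic (n : nat) (x : G) : Prop :=
  word n x /\ forall m, word m x -> (n <= m)%nat.

Lemma word_finite n : finite_set (word n).
Proof.
  induction n as [|n [l Hl]].
  - exists (one :: nil). intros x Hx. inversion Hx. left. reflexivity.
  - exists (flat_map (fun y => map (mul y) gens) l).
    intros x Hx. inversion Hx as [|n' y s Hy Hs]; subst.
    apply in_flat_map. exists y. split; [apply Hl, Hy | apply in_map, Hs].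
Qed.

Lemma short_finite rad : finite_set (short rad).
Proof.
  induction rad as [|rad IH].
  - apply (finite_subset _ _ (word_finite 0)). intros x [m [Hm Hx]].
    replace m with 0%nat in Hx by lia. exact Hx.
  - apply (finite_subset _ _ (finite_union _ _ IH (word_finite (S rad)))).
    intros x [m [Hm Hx]]. destruct (Nat.eq_dec m (S rad)) as [-> | Hne].
    + right. exact Hx.
    + left. exists m. split; [lia | exact Hx].
Qed.

Lemma word_app n x m y : word n x -> word m y -> word (n + m) (x ⋅ y).
Proof.
  intros Hx Hy. induction Hy as [|m y s Hy IH Hs].
  - rewrite mul_one_r, Nat.add_0_r. exact Hx.
  - rewrite mul_assoc, Nat.add_succ_r. constructor; assumption.
Qed.

Lemma generated_mul x y : generated x -> generated y -> generated (x ⋅ y).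
Proof. intros [n Hx] [m Hy]. exists (n + m)%nat. apply word_app; assumption. Qed.

Lemma generated_gen s : In s gens -> generated s.
Proof. intros Hs. exists 1%nat. rewrite <- (mul_one_l s). constructor; [constructor | exact Hs]. Qed.

Lemma generated_inv :
  (forall s, In s gens -> In (inv s) gens) -> forall x, generated x -> generated (inv x).
Proof.
  intros Hsym x [n Hx]. induction Hx as [|n x s Hx IH Hs].
  - rewrite inv_one. exists 0%nat. constructor.
  - rewrite inv_mul. apply generated_mul; [apply generated_gen, Hsym, Hs | exact IH].
Qed.

Lemma generated_geodesic x : generated x -> exists n, geodesic n x.
Proof.
  intros Hx.
  destruct (dec_inh_nat_subset_has_unique_least_element (fun n => word n x)
              (fun n => classic (word n x)) Hx) as [n [[Hn Hmin] _]].
  exists n. split; assumption.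
Qed.

Lemma geodesic_snoc_inv n x :
  geodesic (S n) x -> exists y s, x = y ⋅ s /\ In s gens /\ geodesic n y.
Proof.
  intros [Hx Hmin]. inversion Hx as [|n' y s Hy Hs]; subst.
  exists y, s. split; [reflexivity | split; [exact Hs | split; [exact Hy |]]].
  intros m Hm. specialize (Hmin (S m) (word_snoc m y s Hm Hs)). lia.
Qed.

Lemma short_bound (L : list G) :
  exists rad, forall k, In k L -> generated k -> short rad k.
Proof.
  induction L as [|a L [rad Hrad]].
  - exists 0%nat. intros k [].
  - destruct (classic (generated a)) as [[na Ha] | nGa].
    + exists (rad + na)%nat. intros k [<- | Hk] Gk.
      * exists na. split; [lia | exact Ha].
      * destruct (Hrad k Hk Gk) as [m [Hm Hkm]]. exists m. split; [lia | exact Hkm].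
    + exists rad. intros k [<- | Hk] Gk; [contradiction | exact (Hrad k Hk Gk)].
Qed.

End Words.

Lemma infinite_finitely_generated_subgroup :
  ~ locally_finite mul inv one ->
  exists gens, (forall s, In s gens -> In (inv s) gens) /\ infinite_set (generated gens).
Proof.
  intros Hnlf. apply not_all_ex_not in Hnlf as [l Hl].
  set (gens := l ++ map inv l).
  assert (Hsym : forall s, In s gens -> In (inv s) gens).
  { intros s Hs. apply in_app_or in Hs as [Hs | Hs]; apply in_or_app.
    - right. apply in_map, Hs.
    - left. apply in_map_iff in Hs as [a [<- Ha]]. rewrite inv_inv. exact Ha. }
  exists gens. split; [exact Hsym |]. intros Hfin. apply Hl.
  exists (generated gens). split; [split; [| split] | split].
  - exists 0%nat. constructor.
  - apply generated_mul.
  - apply generated_inv, Hsym.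
  - exact Hfin.
  - intros x Hx. apply generated_gen, in_or_app. left. exact Hx.
Qed.

Definition locally_constant_off (gens L : list G) (P : G -> Prop) : Prop :=
  forall x s, In s gens -> ~ In x L -> ~ In (x ⋅ s) L -> (P x <-> P (x ⋅ s)).

Lemma locally_constant_off_incl gens L L' P :
  incl L L' -> locally_constant_off gens L P -> locally_constant_off gens L' P.
Proof.
  intros HLL' HP x s Hs nLx nLxs.
  apply HP; [exact Hs | intros Lx | intros Lxs]; auto.
Qed.

Lemma neither_locally_constant_off gens L A B :
  locally_constant_off gens L A -> locally_constant_off gens L B ->
  locally_constant_off gens L (fun x => ~ A x /\ ~ B x).
Proof.
  intros HA HB x s Hs nLx nLxs.
  rewrite (HA x s Hs nLx nLxs), (HB x s Hs nLx nLxs). reflexivity.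
Qed.

Definition left_almost_invariant (P : G -> Prop) : Prop :=
  forall p, finite_set (fun x => ~ (P (p ⋅ x) <-> P x)).

Lemma acts_trivially_left_almost_invariant P :
  acts_trivially mul inv P -> left_almost_invariant P.
Proof.
  intros HP p. apply (finite_subset _ _ (HP (inv p))).
  intros x Hx. unfold symdiff, translate. rewrite inv_inv.
  destruct (classic (P x)); tauto.
Qed.

Lemma neither_left_almost_invariant A B :
  left_almost_invariant A -> left_almost_invariant B ->
  left_almost_invariant (fun x => ~ A x /\ ~ B x).
Proof.
  intros HA HB p. apply (finite_subset _ _ (finite_union _ _ (HA p) (HB p))).
  intros x Hx. destruct (classic (A (p ⋅ x) <-> A x)); [right | left]; tauto.
Qed.

Lemma crossing gens L Q p n y :
  locally_constant_off gens L Q -> word gens n y -> Q p -> ~ Q (p ⋅ y) ->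
  exists z, generated gens z /\ In (p ⋅ z) L.
Proof.
  intros HQ Hy. induction Hy as [|n y s Hy IH Hs]; intros Qp nQ.
  - rewrite mul_one_r in nQ. contradiction.
  - destruct (classic (Q (p ⋅ y))) as [Qy | nQy]; [| exact (IH Qp nQy)].
    destruct (classic (In (p ⋅ y) L)) as [Ly | nLy].
    { exists y. split; [exists n; exact Hy | exact Ly]. }
    destruct (classic (In (p ⋅ (y ⋅ s)) L)) as [Lys | nLys].
    { exists (y ⋅ s). split; [exists (S n); constructor; assumption | exact Lys]. }
    rewrite mul_assoc in nQ, nLys.
    exfalso. apply nQ, (HQ _ s Hs nLy nLys), Qy.
Qed.

Lemma infinite_trace_on_subgroup gens L Q :
  (forall s, In s gens -> In (inv s) gens) -> infinite_set (generated gens) ->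
  locally_constant_off gens L Q -> left_almost_invariant Q -> infinite_set Q ->
  infinite_set (fun x => generated gens x /\ Q x).
Proof.
  intros Hsym Hinf HQ HQinv HQinf [M HM].
  assert (Hfew : forall p, finite_set (fun y => generated gens y /\ Q (p ⋅ y))).
  { intros p. apply (finite_subset _ _ (finite_union _ _ (HQinv p) (ex_intro _ M HM))).
    intros y [Hy Qpy]. destruct (classic (Q y)); [right | left]; tauto. }
  (* every p ∈ Q is k⋅w with k ∈ L, w ∈ H and k⋅w ∈ Q *)
  apply HQinf, (finite_subset _ _ (finite_indexed_union L
           (fun k x => exists w, (generated gens w /\ Q (k ⋅ w)) /\ x = k ⋅ w)
           (fun k _ => finite_image (mul k) _ (Hfew k)))).
  intros p Qp.
  destruct (infinite_not_included _ _ Hinf (Hfew p)) as [y [[n Hy] Hno]].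
  assert (nQ : ~ Q (p ⋅ y)) by (intros Qpy; apply Hno; split; [exists n |]; assumption).
  destruct (crossing gens L Q p n y HQ Hy Qp nQ) as [z [Hz Lpz]].
  exists (p ⋅ z). split; [exact Lpz |]. exists (inv z).
  rewrite mul_inv_cancel_r. split; [split; [apply generated_inv |] |]; auto.
Qed.

Section Pivot.
Variables (gens L : list G) (A : G -> Prop) (rad : nat) (h : G).
Hypothesis HA : locally_constant_off gens L A.
Hypothesis HL_short : forall k, In k L -> generated gens k -> short gens rad k.
Hypothesis Hh : forall k, In k L -> A (h ⋅ k) /\ ~ short gens rad (h ⋅ k).

Definition short_or_outside (x : G) : Prop := short gens rad x \/ ~ A x.

Lemma prefix_short_or_outside n x :
  geodesic gens (S n) x -> short_or_outside x ->
  exists y s, x = y ⋅ s /\ In s gens /\ geodesic gens n y /\ short_or_outside y.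
Proof.
  intros Hx Hso.
  destruct (geodesic_snoc_inv gens n x Hx) as (y & s & -> & Hs & Hy).
  exists y, s. split; [reflexivity | split; [exact Hs | split; [exact Hy |]]].
  apply NNPP. intros Hlong_in_A. unfold short_or_outside in Hlong_in_A.
  assert (nshort_y : ~ short gens rad y) by tauto.
  assert (Ay : A y) by (apply NNPP; tauto).
  assert (nshort_ys : ~ short gens rad (y ⋅ s)).
  { intros [m [Hm Hys]]. apply nshort_y. exists n. split; [| exact (proj1 Hy)].
    pose proof (proj2 Hx m Hys). lia. }
  assert (long_not_in_L : forall z, generated gens z -> ~ short gens rad z -> ~ In z L).
  { intros z Gz nz Lz. exact (nz (HL_short z Lz Gz)). }
  destruct Hso as [Hshort | nAys]; [contradiction |].
  apply nAys, (HA y s Hs).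
  - apply long_not_in_L; [exists n; exact (proj1 Hy) | exact nshort_y].
  - apply long_not_in_L; [exists (S n); exact (proj1 Hx) | exact nshort_ys].
  - exact Ay.
Qed.

Lemma translate_avoids y : short_or_outside y -> ~ In (inv h ⋅ y) L.
Proof.
  intros Hy Lhy. destruct (Hh _ Lhy) as [HAy Hfar].
  rewrite mul_inv_cancel_l in HAy, Hfar. unfold short_or_outside in Hy. tauto.
Qed.

Lemma constant_on_translate P :
  locally_constant_off gens L P ->
  forall n x, geodesic gens n x -> short_or_outside x -> (P (inv h ⋅ x) <-> P (inv h)).
Proof.
  intros HP n. induction n as [|n IH]; intros x Hx Hso.
  - destruct Hx as [Hx _]. inversion Hx; subst. rewrite mul_one_r. reflexivity.
  - destruct (prefix_short_or_outside n x Hx Hso) as (y & s & -> & Hs & Hy & Hsoy).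
    rewrite <- (IH y Hy Hsoy), mul_assoc. symmetry. apply HP.
    + exact Hs.
    + apply translate_avoids, Hsoy.
    + rewrite <- mul_assoc. apply translate_avoids, Hso.
Qed.

Lemma constant_off_A P :
  locally_constant_off gens L P ->
  forall x, generated gens x -> ~ A x -> (P (inv h ⋅ x) <-> P (inv h)).
Proof.
  intros HP x Gx nAx. destruct (generated_geodesic gens x Gx) as [n Hn].
  apply (constant_on_translate P HP n x Hn). right. exact nAx.
Qed.

End Pivot.

Lemma pivot_exists gens L A rad :
  (forall k, finite_set (fun x => A x /\ ~ A (x ⋅ k))) -> infinite_set A ->
  exists h, forall k, In k L -> A (h ⋅ k) /\ ~ short gens rad (h ⋅ k).
Proof.
  intros Hright HAinf.
  assert (Hbad : finite_set (fun h => exists k, In k L /\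
            ((A h /\ ~ A (h ⋅ k)) \/ exists z, short gens rad z /\ h = z ⋅ inv k))).
  { apply finite_indexed_union. intros k _. apply finite_union; [apply Hright |].
    exact (finite_image (fun z => z ⋅ inv k) _ (short_finite gens rad)). }
  destruct (infinite_not_included _ _ HAinf Hbad) as [h [Ah Hgood]].
  exists h. intros k Hk. split.
  - apply NNPP. intros nA. apply Hgood. exists k. split; [exact Hk | left; split; assumption].
  - intros Hshort. apply Hgood. exists k. split; [exact Hk | right].
    exists (h ⋅ k). split; [exact Hshort | symmetry; apply mul_inv_cancel_r].
Qed.

Lemma three_pieces_contradiction gens L A B :
  (forall x, A x -> B x -> False) ->
  locally_constant_off gens L A -> locally_constant_off gens L B ->
  (forall k, finite_set (fun x => A x /\ ~ A (x ⋅ k))) ->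
  left_almost_invariant A -> left_almost_invariant B ->
  infinite_set A ->
  infinite_set (fun x => generated gens x /\ B x) ->
  infinite_set (fun x => generated gens x /\ ~ A x /\ ~ B x) -> False.
Proof.
  intros Hdisj HA HB Hright HAinv HBinv HAinf HBinf HCinf.
  destruct (short_bound gens L) as [rad Hrad].
  destruct (pivot_exists gens L A rad Hright HAinf) as [h Hh].
  pose proof (constant_off_A gens L A rad h HA Hrad Hh) as Hconst.
  assert (nA_of_B : forall x, B x -> ~ A x) by (intros x Bx Ax; exact (Hdisj x Ax Bx)).
  destruct (classic (A (inv h))) as [Ah | nAh];
    [| destruct (classic (B (inv h))) as [Bh | nBh]].
  - (* h⁻¹⋅(H ∩ B) ⊆ A *)
    apply HBinf, (finite_subset _ _ (HAinv (inv h))).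
    intros x [Gx Bx]. pose proof (nA_of_B x Bx) as nAx.
    rewrite (Hconst A HA x Gx nAx). tauto.
  - (* h⁻¹⋅(H ∩ C) ⊆ B *)
    apply HCinf, (finite_subset _ _ (HBinv (inv h))).
    intros x [Gx [nAx nBx]]. rewrite (Hconst B HB x Gx nAx). tauto.
  - (* h⁻¹⋅(H ∩ B) ∩ B = ∅ *)
    apply HBinf, (finite_subset _ _ (HBinv (inv h))).
    intros x [Gx Bx]. pose proof (nA_of_B x Bx) as nAx.
    rewrite (Hconst B HB x Gx nAx). tauto.
Qed.

Variable d : G -> G -> R.
Hypothesis Hmet : is_metric d.
Hypothesis Hleft : left_invariant mul d.
Hypothesis Hprop : proper_metric d.

Lemma step_bound (T : list G) : exists r, 0 < r /\ forall s, In s T -> d one s < r.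
Proof.
  induction T as [|a T [r [Hr HT]]].
  - exists 1. split; [lra | intros s []].
  - exists (Rmax (d one a + 1) r). split.
    + apply Rlt_le_trans with r; [exact Hr | apply Rmax_r].
    + intros s [-> | Hs].
      * apply Rlt_le_trans with (d one s + 1); [lra | apply Rmax_l].
      * apply Rlt_le_trans with r; [auto | apply Rmax_r].
Qed.

(* A coarsely clopen set changes along steps x ↦ x⋅s (s ∈ T) only inside a
   ball, since such a step has length d(1, s). *)
Lemma coarsely_clopen_locally_constant (T : list G) (P : G -> Prop) :
  coarsely_clopen d P -> exists L, locally_constant_off T L P.
Proof.
  intros Hcc. destruct (step_bound T) as [r [Hr HT]].
  destruct (Hcc r Hr) as [K [[x0 [r0 HK]] Hsep]].
  destruct (Hprop x0 r0) as [L HL].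
  exists L. intros x s Hs nLx nLxs.
  assert (nKx : ~ K x) by (intros Kx; apply nLx, HL, HK, Kx).
  assert (nKxs : ~ K (x ⋅ s)) by (intros Kxs; apply nLxs, HL, HK, Kxs).
  assert (Hdist : d x (x ⋅ s) < r).
  { rewrite <- (mul_one_r x) at 1. rewrite Hleft. apply HT, Hs. }
  pose proof Hmet as (_ & _ & Hsym & _).
  split; intros HP; apply NNPP; intros HnP.
  - exact (Hsep _ _ HP nKx HnP nKxs Hdist).
  - rewrite Hsym in Hdist. exact (Hsep _ _ HP nKxs HnP nKx Hdist).
Qed.

Lemma coarsely_clopen_right_boundary (P : G -> Prop) (g : G) :
  coarsely_clopen d P -> finite_set (fun x => P x /\ ~ P (x ⋅ g)).
Proof.
  intros Hcc. destruct (coarsely_clopen_locally_constant (g :: nil) P Hcc) as [L HL].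
  apply (finite_subset _ (fun x => In x L \/ exists y, In y L /\ x = y ⋅ inv g)).
  - apply finite_union; [exists L; auto |].
    exact (finite_image (fun y => y ⋅ inv g) (fun y => In y L) (ex_intro _ L (fun _ Hy => Hy))).
  - intros x [Px nPxg]. destruct (classic (In x L)) as [Lx | nLx]; [left; exact Lx | right].
    exists (x ⋅ g). split; [| symmetry; apply mul_inv_cancel_r].
    apply NNPP. intros nLxg. apply nPxg, (HL x g (or_introl eq_refl) nLx nLxg), Px.
Qed.

Lemma no_two_trivial_pieces A B E :
  ~ locally_finite mul inv one ->
  NCC d A -> NCC d B -> infinite_set E ->
  (forall x, A x -> B x -> False) -> (forall x, A x -> E x -> False) ->
  (forall x, B x -> E x -> False) ->
  acts_trivially mul inv A -> acts_trivially mul inv B -> False.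
Proof.
  intros Hnlf [ccA [infA _]] [ccB [infB _]] infE DAB DAE DBE TA TB.
  destruct (infinite_finitely_generated_subgroup Hnlf) as [gens [Hsym Hinf]].
  destruct (coarsely_clopen_locally_constant gens A ccA) as [LA HLA].
  destruct (coarsely_clopen_locally_constant gens B ccB) as [LB HLB].
  assert (HA : locally_constant_off gens (LA ++ LB) A).
  { apply (locally_constant_off_incl gens LA); [apply incl_appl, incl_refl | exact HLA]. }
  assert (HB : locally_constant_off gens (LA ++ LB) B).
  { apply (locally_constant_off_incl gens LB); [apply incl_appr, incl_refl | exact HLB]. }
  assert (infC : infinite_set (fun x => ~ A x /\ ~ B x)).
  { intros Hfin. apply infE, (finite_subset _ _ Hfin). intros x Ex.
    split; [intros Ax; exact (DAE x Ax Ex) | intros Bx; exact (DBE x Bx Ex)]. }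
  pose proof (acts_trivially_left_almost_invariant A TA) as HAinv.
  pose proof (acts_trivially_left_almost_invariant B TB) as HBinv.
  apply (three_pieces_contradiction gens (LA ++ LB) A B DAB HA HB
           (fun k => coarsely_clopen_right_boundary A k ccA) HAinv HBinv infA).
  - exact (infinite_trace_on_subgroup gens (LA ++ LB) B Hsym Hinf HB HBinv infB).
  - exact (infinite_trace_on_subgroup gens (LA ++ LB) _ Hsym Hinf
             (neither_locally_constant_off gens _ A B HA HB)
             (neither_left_almost_invariant A B HAinv HBinv) infC).
Qed.

End Group.

Theorem lemma5p9 (G : Type) (mul : G -> G -> G) (inv : G -> G) (one : G)
  (d : G -> G -> R)
  (Hgrp : is_group mul inv one)
  (Hcount : @countable_type G)
  (Hmet : is_metric d)
  (Hleft : left_invariant mul d)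
  (Hprop : proper_metric d)
  (Hnlf : ~ locally_finite mul inv one)
  (E1 E2 E3 : G -> Prop)
  (H1 : NCC d E1) (H2 : NCC d E2) (H3 : NCC d E3)
  (D12 : forall x, E1 x -> E2 x -> False)
  (D13 : forall x, E1 x -> E3 x -> False)
  (D23 : forall x, E2 x -> E3 x -> False) :
  ~ (acts_trivially mul inv E1 /\ acts_trivially mul inv E2) /\
  ~ (acts_trivially mul inv E1 /\ acts_trivially mul inv E3) /\
  ~ (acts_trivially mul inv E2 /\ acts_trivially mul inv E3).
Proof.
  pose proof (no_two_trivial_pieces mul inv one Hgrp d Hmet Hleft Hprop) as Hpair.
  pose proof (proj1 (proj2 H1)) as inf1.
  pose proof (proj1 (proj2 H2)) as inf2.
  pose proof (proj1 (proj2 H3)) as inf3.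
  split; [| split]; intros [T T'].
  - exact (Hpair E1 E2 E3 Hnlf H1 H2 inf3 D12 D13 D23 T T').
  - exact (Hpair E1 E3 E2 Hnlf H1 H3 inf2 D13 D12 (fun x a b => D23 x b a) T T').
  - exact (Hpair E2 E3 E1 Hnlf H2 H3 inf1 D23 (fun x a b => D12 x b a)
             (fun x a b => D13 x b a) T T').
Qed.
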